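(* Let $n$ be a nonnegative integer and let $q$, $a$, $z$ be indeterminates (equivalently, generic complex numbers such that no denominator below vanishes). Then \[ \frac{(q^{z-n+\frac{3}{2}};q)_n\,(aq^{z-\frac{1}{2}};q)_n} {(q^{z-2n+2};q)_n\,(aq^{z+n-1};q)_n} =\sum_{k=0}^n \frac{(q^{-n};q)_k\,(q^{-n+\frac{1}{2}};q)_k\,(q^{\frac{5}{2}-2n}/a;q)_k} {(q;q)_k\,(q^{z-2n+2};q)_k\,(q^{2-2n-z}/a;q)_k}\,q^k . \]
   Context: For a variable $u$ and a nonnegative integer $n$, the $q$-shifted factorial is $(u;q)_0=1$ and $(u;q)_n=(1-u)(1-uq)\cdots(1-uq^{n-1})$. Powers such as $q^{z}$ and $q^{1/2}$ are understood formally (i.e., $q^{z}$ and $q^{1/2}$ are treated as variables). *)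

From mathcomp Require Import all_boot all_order all_algebra.
Set Implicit Arguments. Unset Strict Implicit. Unset Printing Implicit Defensive.
Import GRing.Theory Num.Theory.
Local Open Scope ring_scope.

Definition qpoch (F : ringType) (u q : F) (n : nat) : F :=
  \prod_(i < n) (1 - u * q ^+ i).

From mathcomp Require Import all_boot all_order all_algebra.
From mathcomp Require Import ring.
Import GRing.Theory Num.Theory.
Local Open Scope ring_scope.

(* The right-hand side is a terminating balanced 3phi2, so the identity is the
   q-Pfaff-Saalschutz sum with q = s^2, numerator parameters q^(1/2-n) and
   q^(5/2-2n)/a and denominator parameter q^(z-2n+2).  That sum is proved in the
   reversed form
     sum_k [n k]_q (a)_k (b)_k (abc)_n/(abc)_k (c)_(n-k) c^k = (ac)_n (bc)_n
   by induction on n: the term at n+1 equals (1-acq^n)(1-bcq^n) times the term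
   at n plus a telescoping difference of an explicit certificate.  Rewriting
   (c;q)_(n-k) through (q^(1-n)/c;q)_k turns it into the standard form. *)

Section QPochhammer.
Variable F : fieldType.
Implicit Types (q u a b c : F).

Lemma qpoch0 u q : qpoch u q 0 = 1.
Proof. by rewrite /qpoch big_ord0. Qed.

Lemma qpochS u q n : qpoch u q n.+1 = qpoch u q n * (1 - u * q ^+ n).
Proof. by rewrite /qpoch big_ord_recr. Qed.

Lemma qpochD u q m p : qpoch u q (m + p) = qpoch u q m * qpoch (u * q ^+ m) q p.
Proof.
elim: p => [|p IHp]; first by rewrite addn0 qpoch0 mulr1.
by rewrite addnS !qpochS IHp exprD; ring.
Qed.

Lemma qpoch_neq0_leq {u q m n} : (m <= n)%N -> qpoch u q n != 0 -> qpoch u q m != 0.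
Proof. by move=> /subnKC <-; rewrite qpochD mulf_eq0 negb_or => /andP[]. Qed.

Lemma qpoch_factor_neq0 {u q m n} :
  (m < n)%N -> qpoch u q n != 0 -> 1 - u * q ^+ m != 0.
Proof.
move=> lt_mn /(qpoch_neq0_leq lt_mn).
by rewrite qpochS mulf_eq0 negb_or => /andP[].
Qed.

Definition saalschutz_term q a b c n k :=
  qpoch q q n / (qpoch q q k * qpoch q q (n - k))
  * qpoch a q k * qpoch b q k * (qpoch (a * b * c) q n / qpoch (a * b * c) q k)
  * qpoch c q (n - k) * c ^+ k.

Definition saalschutz_cert q a b c n k :=
  qpoch q q n * (1 - q ^+ k) / (qpoch q q k * qpoch q q (n.+1 - k))
  * qpoch a q k * qpoch b q k * (qpoch (a * b * c) q n / qpoch (a * b * c) q k)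
  * qpoch c q (n.+1 - k) * c ^+ k * (a * b * c * q ^+ n - q ^+ (n.+1 - k)).

Lemma saalschutz_termS q a b c k j :
  qpoch q q k != 0 -> qpoch q q j != 0 -> 1 - q * q ^+ j != 0 ->
  1 - q * q ^+ k != 0 -> qpoch (a * b * c) q k != 0 ->
  1 - a * b * c * q ^+ k != 0 ->
  saalschutz_term q a b c (k + j).+1 k =
    (1 - a * c * q ^+ (k + j)) * (1 - b * c * q ^+ (k + j))
      * saalschutz_term q a b c (k + j) k
    + (saalschutz_cert q a b c (k + j) k.+1 - saalschutz_cert q a b c (k + j) k).
Proof.
move=> qk qj qSj qSk abck abcSk.
have e : ((k + j).+1 - k = j.+1)%N by rewrite -addnS addKn.
rewrite /saalschutz_term /saalschutz_cert e subSS addKn !qpochS !exprS !exprD.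
by field; rewrite qk qj qSj qSk abck abcSk.
Qed.

Lemma saalschutz_sum q a b c n :
  qpoch q q n != 0 -> qpoch (a * b * c) q n != 0 ->
  \sum_(k < n.+1) saalschutz_term q a b c n k = qpoch (a * c) q n * qpoch (b * c) q n.
Proof.
elim: n => [|n IHn] qn abcn.
  by rewrite big_ord1 /saalschutz_term subnn !qpoch0 expr0 !(mulr1, divr1, mul1r) invr1.
have qpre m : (m <= n.+1)%N -> qpoch q q m != 0 by move/qpoch_neq0_leq; apply.
have abcpre m : (m <= n.+1)%N -> qpoch (a * b * c) q m != 0.
  by move/qpoch_neq0_leq; apply.
have qfac m : (m < n.+1)%N -> 1 - q * q ^+ m != 0 by move/qpoch_factor_neq0; apply.
have abcfac m : (m < n.+1)%N -> 1 - a * b * c * q ^+ m != 0.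
  by move/qpoch_factor_neq0; apply.
set G := saalschutz_cert q a b c n.
rewrite big_ord_recr /= (eq_bigr (fun i : 'I_n.+1 =>
    (1 - a * c * q ^+ n) * (1 - b * c * q ^+ n) * saalschutz_term q a b c n i
    + (G i.+1 - G i))); last first.
  move=> [i /= lt_in] _.
  have le_nin : (n - i <= n.+1)%N by rewrite (leq_trans (leq_subr _ _)).
  have lt_nin : (n - i < n.+1)%N by rewrite ltnS leq_subr.
  have := saalschutz_termS q a b c i (n - i) (qpre _ (ltnW lt_in)) (qpre _ le_nin)
    (qfac _ lt_nin) (qfac _ lt_in) (abcpre _ (ltnW lt_in)) (abcfac _ lt_in).
  by rewrite subnKC.
rewrite big_split /= -mulr_sumr IHn ?qpre ?abcpre //.
rewrite -(big_mkord xpredT (fun i => G i.+1 - G i)) telescope_sumr //.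
have -> : G 0%N = 0 by rewrite /G /saalschutz_cert expr0 subrr mulr0 !mul0r.
have cancel_last : G n.+1 + saalschutz_term q a b c n.+1 n.+1 = 0.
  rewrite /G /saalschutz_cert /saalschutz_term !subnn !qpoch0 expr0 !qpochS exprS.
  by field; rewrite qpre ?abcpre ?qfac ?abcfac.
by rewrite subr0 -addrA cancel_last addr0 !qpochS; ring.
Qed.

Lemma qpoch_reversal q c k j : q != 0 -> c != 0 ->
  qpoch (q ^+ (k + j))^-1 q k * q ^+ k * qpoch c q (k + j) * qpoch q q j
  = qpoch q q (k + j) * qpoch c q j * c ^+ k * qpoch (q / q ^+ (k + j) / c) q k.
Proof.
move=> q0 c0; elim: k j => [|k IHk] j.
  by rewrite !add0n !qpoch0 !expr0 !(mulr1, mul1r) mulrC.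
have := IHk j.+1; rewrite addSnnS; set N := (k + j.+1)%N => IH.
have eN : q ^+ N = q ^+ k * (q * q ^+ j) by rewrite /N exprD exprS.
have qk : q ^+ k != 0 by rewrite expf_neq0.
have qj : q ^+ j != 0 by rewrite expf_neq0.
rewrite !qpochS !exprS eN in IH *.
move/(congr1 (fun x => x * - (q ^+ j)^-1)): IH => IH.
by apply: etrans _ (etrans IH _); field; rewrite ?q0 ?c0 ?qk ?qj.
Qed.

Lemma q_pfaff_saalschutz q a b c n :
  q != 0 -> c != 0 -> qpoch q q n != 0 -> qpoch (a * b * c) q n != 0 ->
  qpoch c q n != 0 -> qpoch (q / q ^+ n / c) q n != 0 ->
  qpoch (b * c) q n * qpoch (a * c) q n / (qpoch (a * b * c) q n * qpoch c q n)
  = \sum_(k < n.+1) qpoch (q ^+ n)^-1 q k * qpoch a q k * qpoch b q k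
     / (qpoch q q k * qpoch (a * b * c) q k * qpoch (q / q ^+ n / c) q k) * q ^+ k.
Proof.
move=> q0 c0 qn abcn cn dn.
rewrite [X in X / _]mulrC -saalschutz_sum // mulr_suml.
apply: eq_bigr => -[k /= lt_kn] _; rewrite ltnS in lt_kn.
have := qpoch_reversal q c k (n - k) q0 c0; rewrite subnKC // => reversal.
have qk : q ^+ k != 0 by rewrite expf_neq0.
have qqk := qpoch_neq0_leq lt_kn qn.
have qnk := qpoch_neq0_leq (leq_subr k n) qn.
have abck := qpoch_neq0_leq lt_kn abcn.
have dk := qpoch_neq0_leq lt_kn dn.
transitivity (qpoch (q ^+ n)^-1 q k * q ^+ k * qpoch c q n * qpoch q q (n - k)
  * (qpoch a q k * qpoch b q k / (qpoch q q k * qpoch (a * b * c) q k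
     * qpoch (q / q ^+ n / c) q k * qpoch c q n * qpoch q q (n - k)))); last first.
  by field; rewrite ?qk ?cn ?qqk ?qnk ?abck ?dk.
by rewrite reversal /saalschutz_term; field; rewrite abcn cn qqk qnk abck dk.
Qed.

End QPochhammer.

Theorem mainTheorem3 (F : fieldType) (n : nat) (s w a : F)
  (hs : s != 0) (hw : w != 0) (ha : a != 0)
  (hq : qpoch (s ^+ 2) (s ^+ 2) n != 0)
  (hd1 : qpoch (w * s ^ (4%:Z - 4%:Z * n%:Z)) (s ^+ 2) n != 0)
  (hd2 : qpoch (a * w * s ^ (2%:Z * n%:Z - 2%:Z)) (s ^+ 2) n != 0)
  (hd3 : qpoch (s ^ (4%:Z - 4%:Z * n%:Z) / a / w) (s ^+ 2) n != 0) :
  qpoch (w * s ^ (3%:Z - 2%:Z * n%:Z)) (s ^+ 2) n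
    * qpoch (a * w * s ^ (- 1%:Z)) (s ^+ 2) n
    / (qpoch (w * s ^ (4%:Z - 4%:Z * n%:Z)) (s ^+ 2) n
       * qpoch (a * w * s ^ (2%:Z * n%:Z - 2%:Z)) (s ^+ 2) n)
  = \sum_(k < n.+1)
      qpoch (s ^ (- (2%:Z * n%:Z))) (s ^+ 2) k
      * qpoch (s ^ (1%:Z - 2%:Z * n%:Z)) (s ^+ 2) k
      * qpoch (s ^ (5%:Z - 4%:Z * n%:Z) / a) (s ^+ 2) k
      / (qpoch (s ^+ 2) (s ^+ 2) k
         * qpoch (w * s ^ (4%:Z - 4%:Z * n%:Z)) (s ^+ 2) k
         * qpoch (s ^ (4%:Z - 4%:Z * n%:Z) / a / w) (s ^+ 2) k)
      * (s ^+ 2) ^+ k.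
Proof.
have t0 : s ^+ n != 0 by rewrite expf_neq0.
have zpow i j : s ^ (i%:Z - j%:Z * n%:Z) = s ^+ i / (s ^+ n) ^+ j.
  by rewrite expfzDr // -invr_expz [(_ * n%:Z)]mulrC -exprz_exp mulrC.
have zpowN1 : s ^ (- 1%:Z) = s^-1 by rewrite -invr_expz expr1z.
have zpowN2n : s ^ (- (2%:Z * n%:Z)) = ((s ^+ n) ^+ 2)^-1.
  by rewrite -invr_expz [(_ * n%:Z)]mulrC -exprz_exp.
have zpow2n2 : s ^ (2%:Z * n%:Z - 2%:Z) = (s ^+ n) ^+ 2 / s ^+ 2.
  by rewrite expfzDr // -invr_expz [(_ * n%:Z)]mulrC -exprz_exp.
rewrite !zpow zpowN1 zpowN2n zpow2n2 in hd1 hd2 hd3 *.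
(* t = q^(n/2), A = q^(1/2-n), B = q^(5/2-2n)/a and c = a q^(z+n-1). *)
set t := s ^+ n; set q := s ^+ 2.
pose A := s ^+ 1 / t ^+ 2; pose B := s ^+ 5 / t ^+ 4 / a.
pose c := a * w * (t ^+ 2 / s ^+ 2).
have c0 : c != 0 by rewrite !mulf_neq0 ?invr_eq0 ?expf_neq0.
have eABc : w * (s ^+ 4 / t ^+ 4) = A * B * c.
  by rewrite /A /B /c; field; rewrite ?hs ?t0 ?ha ?hw.
have eAc : a * w * s^-1 = A * c.
  by rewrite /A /c; field; rewrite ?hs ?t0 ?ha ?hw.
have eBc : w * (s ^+ 3 / t ^+ 2) = B * c.
  by rewrite /B /c; field; rewrite ?hs ?t0 ?ha ?hw.
have eqn : (t ^+ 2)^-1 = (q ^+ n)^-1 by rewrite /t /q -!exprM mulnC.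
have eD : s ^+ 4 / t ^+ 4 / a / w = q / q ^+ n / c.
  by rewrite -eqn /q /c; field; rewrite ?hs ?t0 ?ha ?hw.
rewrite eABc eD in hd1 hd3 *; rewrite eAc eBc -/A eqn.
by apply: q_pfaff_saalschutz; rewrite // expf_neq0.
Qed.
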